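(* Let $\pi$ be a propositional formula that is neither a tautology nor a contradiction. Then the formula $[\ddagger\pi](\Box\lnot\pi \lor \Box\pi) \leftrightarrow \Box\bot$ is valid, i.e. true at every world of every model.
   Context: Fix a countable non-empty set $\mathit{At}$ of atoms. Formulas are built from $\top$, atoms $p\in\mathit{At}$, $\lnot$, $\land$, $\Box$ and, for each propositional formula $\pi$, the operator $[\ddagger\pi]$ (read ''after the agent forgets whether $\pi$''); $\bot,\lor,\to,\leftrightarrow$ are defined as usual and $\Diamond\varphi := \lnot\Box\lnot\varphi$, $\langle\ddagger\pi\rangle\varphi:=\lnot[\ddagger\pi]\lnot\varphi$. A model is $\mathcal{M}=\langle W,R,V\rangle$ with $W\neq\varnothing$, $R\subseteq W\times W$ arbitrary, $V:\mathit{At}\to\mathcal{P}(W)$; $\mathcal{M},w\models p$ iff $w\in V(p)$, Boolean clauses as usual, and $\mathcal{M},w\models\Box\varphi$ iff $\mathcal{M},v\models\varphi$ for all $v$ with $wRv$. Clauses: a literal is an atom or its negation; a clause is a finite set $D$ of literals read as $\bigvee D$ ($\bigvee\varnothing:=\bot$); it is tautological if it contains both $p$ and $\lnot p$ for some $p$. For propositional $\pi$, $\mathcal{C}(\pi)$ is the set of all non-tautological clauses $D$ with $\models\pi\to\bigvee D$ such that no proper subset $D'\subsetneq D$ satisfies $\models\pi\to\bigvee D'$. Model operation: for a model $\mathcal{M}$ and a finite family $(D_i)_{i\in I}$ of non-tautological clauses with $0\notin I$, $\mathcal{M}^{(D_i)_{i\in I}}_u=\langle W',R',V'\rangle$ has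 $W'=W\times(\{0\}\cup I)$, $(w,i)R'(v,j)$ iff $wRv$, $(w,0)\in V'(p)$ iff $w\in V(p)$, and for $i\in I$: $(w,i)\in V'(p)$ iff $\lnot p\in D_i$, or $\{p,\lnot p\}\cap D_i=\varnothing$ and $w\in V(p)$. Semantics of forgetting whether: $\mathcal{M},w\models[\ddagger\pi]\varphi$ iff for all $D_1\in\mathcal{C}(\pi)$ and all $D_2\in\mathcal{C}(\lnot\pi)$, $\mathcal{M}^{(D_1,D_2)}_u,(w,0)\models\varphi$ (family indexed by $I=\{1,2\}$). *)

From HB Require Import structures.
From mathcomp Require Import all_boot.
From mathcomp Require Import finmap.
Set Implicit Arguments. Unset Strict Implicit. Unset Printing Implicit Defensive.
Local Open Scope fset_scope.

Section Logic.
Variable At : countType.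

Inductive pform : Type :=
| PTop : pform
| PAtom : At -> pform
| PNot : pform -> pform
| PAnd : pform -> pform -> pform.

(* Modal formulas with the "forget whether pi" operator [‡pi] for propositional pi. *)
Inductive form : Type :=
| FTop : form
| FAtom : At -> form
| FNot : form -> form
| FAnd : form -> form -> form
| FBox : form -> form
| FForget : pform -> form -> form.

Definition FBot : form := FNot FTop.
Definition FOr (a b : form) : form := FNot (FAnd (FNot a) (FNot b)).
Definition FImpl (a b : form) : form := FOr (FNot a) b.
Definition FIff (a b : form) : form := FAnd (FImpl a b) (FImpl b a).
Definition FDia (a : form) : form := FNot (FBox (FNot a)).

Fixpoint emb (p : pform) : form :=
  match p with
  | PTop => FTop
  | PAtom a => FAtom a
  | PNot q => FNot (emb q)
  | PAnd q r => FAnd (emb q) (emb r)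
  end.

Fixpoint peval (v : At -> bool) (p : pform) : bool :=
  match p with
  | PTop => true
  | PAtom a => v a
  | PNot q => ~~ peval v q
  | PAnd q r => peval v q && peval v r
  end.

Definition ptautology (p : pform) : Prop := forall v, peval v p.
Definition pcontradiction (p : pform) : Prop := forall v, ~~ peval v p.

(* Literals: (p, true) is the atom p, (p, false) is its negation ¬p. *)
Definition literal := (At * bool)%type.
(* A clause is a finite set of literals, read as their disjunction. *)
Definition clause := {fset literal}.

Definition lit_val (v : At -> bool) (l : literal) : bool :=
  if l.2 then v l.1 else ~~ v l.1.

Definition clause_val (v : At -> bool) (D : clause) : Prop :=
  exists2 l, l \in D & lit_val v l.

Definition tautological (D : clause) : Prop :=
  exists p, (p, true) \in D /\ (p, false) \in D.

Definition entails (p : pform) (D : clause) : Prop :=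
  forall v, peval v p -> clause_val v D.

Definition inC (p : pform) (D : clause) : Prop :=
  ~ tautological D /\ entails p D /\
  (forall D' : clause, D' `<=` D -> D' != D -> ~ entails p D').

(* Kripke models (W is any type; nonemptiness is automatic since validity
   is truth at every world w). *)
Record model : Type := Model {
  world : Type;
  rel : world -> world -> Prop;
  val : At -> world -> Prop }.

(* M^{(D_i)_{i in I}}_u with I = {1,...,n} for Ds = [:: D_1; ...; D_n];
   index 0 is the original copy. *)
Arguments rel : clear implicits.
Arguments val : clear implicits.

Definition lit_update (M : model) (Ds : seq clause) : model :=
  @Model (world M * 'I_(size Ds).+1)%type
    (fun x y => rel M x.1 y.1)
    (fun p x =>
       if (x.2 : nat) == 0 then val M p x.1
       else let D := nth fset0 Ds (x.2).-1 in
            (p, false) \in D \/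
            ((p, true) \notin D /\ (p, false) \notin D /\ val M p x.1)).

Fixpoint sat (phi : form) : forall M : model, world M -> Prop :=
  match phi with
  | FTop => fun M w => True
  | FAtom p => fun M w => val M p w
  | FNot a => fun M w => ~ @sat a M w
  | FAnd a b => fun M w => @sat a M w /\ @sat b M w
  | FBox a => fun M w => forall u, rel M w u -> @sat a M u
  | FForget p a => fun M w =>
      forall D1 D2 : clause, inC p D1 -> inC (PNot p) D2 ->
        @sat a (lit_update M [:: D1; D2]) (w, ord0)
  end.

Definition valid (phi : form) : Prop := forall (M : model) (w : world M), @sat phi M w.

End Logic.

From Pilot Require Import Defs.
From mathcomp Require Import all_boot finmap.
From Stdlib Require Import Classical ClassicalDescription.
Local Open Scope fset_scope.

(* If the world has no successor, both sides hold trivially.  Otherwise take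
   D1 in C(pi) and D2 in C(~pi), which exist since pi is neither a tautology
   nor a contradiction.  A successor u has copies (u,1) and (u,2) in the
   updated model, and at (u,i) every literal of the non-tautological clause
   D_i is false; as pi entails D1 and ~pi entails D2, pi fails at (u,1) and
   holds at (u,2), so neither [Box ~pi] nor [Box pi] holds. *)

Section ForgettingWhether.
Variable At : countType.

Fixpoint atoms (p : pform At) : seq At :=
  match p with
  | PTop => [::]
  | PAtom a => [:: a]
  | PNot q => atoms q
  | PAnd q r => atoms q ++ atoms r
  end.

Lemma eq_peval (p : pform At) (v v' : At -> bool) :
  {in atoms p, v =1 v'} -> peval v p = peval v' p.
Proof.
elim: p => //= [a|q IHq|q IHq r IHr] vv'.
- by apply: vv'; rewrite inE.
- by rewrite IHq.
- by rewrite IHq ?IHr // => a Ha; apply: vv'; rewrite mem_cat Ha ?orbT.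
Qed.

Lemma exists_minimal_subclause (P : clause At -> Prop) (D : clause At) :
  P D -> exists2 D', D' `<=` D & P D' /\
    forall D'' : clause At, D'' `<=` D' -> D'' != D' -> ~ P D''.
Proof.
elim: #|` D| {-2}D (leqnn #|` D|) => [|n IHn] {}D cardD PD.
- exists D => //; split=> // D'' subD'' neqD''.
  have := fproper_ltn_card (A := D'') (B := D).
  by rewrite fproperEneq neqD'' subD'' => /(_ isT) /leq_trans /(_ cardD).
- have [[D' [subD' neqD' PD']] | noP] :=
    classic (exists D', [/\ D' `<=` D, D' != D & P D']).
  + have ltD' : #|` D'| < #|` D| by apply: fproper_ltn_card; rewrite fproperEneq neqD'.
    have [D'' subD'' minD''] := IHn D' (leq_trans ltD' cardD) PD'.
    by exists D'' => //; exact: fsubset_trans subD'' subD'.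
  + exists D => //; split=> // D'' subD'' neqD'' PD''.
    by apply: noP; exists D''.
Qed.

Lemma exists_inC (p : pform At) : ~ ptautology p -> exists D, inC p D.
Proof.
move=> ntaut_p.
have [v pv_false] : exists v, ~~ peval v p.
  apply: NNPP => nex; apply: ntaut_p => v.
  by apply: NNPP => pv; apply: nex; exists v; apply/negP.
(* Every model of p differs from v on some atom of p, hence satisfies D0; and
   D0 has no complementary pair, so neither has any subclause of it. *)
pose D0 : clause At := [fset l in map (fun a => (a, ~~ v a)) (atoms p)].
have entails_D0 : entails p D0.
  move=> v' pv'; apply: NNPP => nD0.
  suff eqv : peval v p = peval v' p by move: pv_false; rewrite eqv pv'.
  apply: eq_peval => a atom_a.
  have inD0 : (a, ~~ v a) \in D0 by rewrite in_fset; apply/mapP; exists a.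
  have : ~~ lit_val v' (a, ~~ v a) by apply/negP => lv'; apply: nD0; exists (a, ~~ v a).
  by rewrite /lit_val /=; case: (v a); case: (v' a).
have [D subD [entails_D minD]] := @exists_minimal_subclause (entails p) D0 entails_D0.
exists D; split=> // -[b [bt bf]].
move: (fsubsetP subD _ bt) (fsubsetP subD _ bf).
rewrite !in_fset => /mapP [x _ [<- vx]] /mapP [y _ [<- vy]].
by move: vy; rewrite -vx.
Qed.

Definition world_val {M : model At} (w : world M) (a : At) : bool :=
  if excluded_middle_informative (@Defs.val At M a w) then true else false.

Lemma sat_emb (p : pform At) (M : model At) (w : world M) :
  sat (emb p) w <-> peval (world_val w) p.
Proof.
rewrite /world_val; elim: p => /= [|a|q IHq|q IHq r IHr].
- by [].
- by case: excluded_middle_informative.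
- by rewrite IHq; case: (peval _ q); split => //= nq; exfalso; apply: nq.
- by rewrite IHq IHr; case: (peval _ q); case: (peval _ r); split => //; case.
Qed.

Lemma lit_update_clause_false (M : model At) (Ds : seq (clause At))
    (x : world (lit_update M Ds)) (l : literal At) :
  let D := nth fset0 Ds (x.2).-1 in
  (x.2 : nat) != 0 -> ~ tautological D -> l \in D -> ~~ lit_val (world_val x) l.
Proof.
move=> D x2_neq0 ntaut_D; case: l => a [] lD;
  rewrite /lit_val /world_val /=; case: excluded_middle_informative => //=;
  rewrite (negPf x2_neq0) -/D.
- case=> [aF | [/negP naD _]]; last by [].
  by exfalso; apply: ntaut_D; exists a.
- by move=> nval; exfalso; apply: nval; left.
Qed.

Lemma lit_update_peval_false (M : model At) (Ds : seq (clause At))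
    (x : world (lit_update M Ds)) (p : pform At) :
  let D := nth fset0 Ds (x.2).-1 in
  (x.2 : nat) != 0 -> ~ tautological D -> entails p D -> ~~ peval (world_val x) p.
Proof.
move=> D x2_neq0 ntaut_D entails_D; apply/negP => px.
have [l lD lx] := entails_D _ px.
by move: lx; apply/negP; apply: lit_update_clause_false.
Qed.

End ForgettingWhether.

Theorem proposition1 (At : countType) (a0 : At) (pi : pform At) :
  ~ ptautology pi -> ~ pcontradiction pi ->
  valid (FIff (FForget pi (FOr (FBox (FNot (emb pi))) (FBox (emb pi))))
              (FBox (FBot At))).
Proof.
move=> ntaut_pi ncontr_pi M w /=; split.
- move=> [nforget nbot]; apply: nforget => forget; apply: nbot => u wu _.
  have [D1 C1] := @exists_inC _ pi ntaut_pi.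
  have [D2 C2] : exists D2, inC (PNot pi) D2.
    by apply: exists_inC => taut; apply: ncontr_pi => v; apply: taut.
  pose u1 : world (lit_update M [:: D1; D2]) := (u, Ordinal (isT : 1 < 3)).
  pose u2 : world (lit_update M [:: D1; D2]) := (u, Ordinal (isT : 2 < 3)).
  have not_pi_u1 := @lit_update_peval_false _ _ _ u1 pi isT C1.1 C1.2.1.
  have pi_u2 := @lit_update_peval_false _ _ _ u2 (PNot pi) isT C2.1 C2.2.1.
  apply: (forget D1 D2 C1 C2); split=> [box_npi | box_pi].
  + by apply: (box_npi u2 wu); apply/sat_emb; rewrite -[peval _ _]negbK.
  + by move/negP: not_pi_u1; apply; apply/sat_emb; apply: (box_pi u1 wu).
- move=> [nbot nforget]; apply: nbot => no_succ; apply: nforget => D1 D2 _ _ [nbox _].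
  by apply: nbox => u wu; case: (no_succ u.1 wu).
Qed.
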